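(* Let $(X,d)$ be a metric space, $x_0\in X$, $n\geq 1$. For all $a,b\in\pi_n(X,x_0)$, $\rho(a,b)=\rho(a^{-1},b^{-1})$.
   Context: $\Omega^n(X,x_0)$ is the set of continuous maps $\alpha:[0,1]^n\to X$ with $\alpha(\partial[0,1]^n)=\{x_0\}$, with uniform metric $\mu(\alpha,\beta)=\sup_{t\in[0,1]^n}d(\alpha(t),\beta(t))$. For $a,b\in\pi_n(X,x_0)$, $\rho(a,b)=\inf\{\mu(\alpha,\beta)\mid\alpha\in a,\beta\in b\}$. *)

From HB Require Import structures.
From mathcomp Require Import all_boot all_order all_algebra.
From mathcomp Require Import boolp classical_sets reals ereal.
Import Order.TTheory GRing.Theory Num.Theory.
Local Open Scope classical_set_scope.
Local Open Scope ring_scope.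

Section Defs.
Variables (R : realType) (X : Type) (d : X -> X -> R).

Definition is_metric : Prop :=
  [/\ forall x y, 0 <= d x y,
      forall x y, d x y = 0 <-> x = y,
      forall x y, d x y = d y x &
      forall x y z, d x z <= d x y + d y z].

Definition cube (n : nat) : set ('I_n -> R) :=
  [set t | forall i, 0 <= t i <= 1].

Definition cube_boundary (n : nat) : set ('I_n -> R) :=
  [set t | cube n t /\ exists i, t i = 0 \/ t i = 1].

Definition unit_interval : set R := [set s | 0 <= s <= 1].

(* continuity on the cube, for the (max) Euclidean topology of [0,1]^n *)
Definition cont_on_cube (n : nat) (f : ('I_n -> R) -> X) : Prop :=
  forall t, cube n t -> forall e, 0 < e -> exists2 del, 0 < del &
    forall s, cube n s -> (forall i, `|s i - t i| < del) -> d (f s) (f t) < e.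

Definition Omega (n : nat) (x0 : X) : set (('I_n -> R) -> X) :=
  [set f | cont_on_cube n f /\ forall t, cube_boundary n t -> f t = x0].

Definition homotopic_rel (n : nat) (x0 : X) (f g : ('I_n -> R) -> X) : Prop :=
  exists H : R -> ('I_n -> R) -> X,
    [/\ (forall u t, unit_interval u -> cube n t -> forall e, 0 < e ->
           exists2 del, 0 < del & forall v s, unit_interval v -> cube n s ->
             `|v - u| < del -> (forall i, `|s i - t i| < del) ->
             d (H v s) (H u t) < e),
        forall t, cube n t -> H 0 t = f t,
        forall t, cube n t -> H 1 t = g t &
        forall u t, unit_interval u -> cube_boundary n t -> H u t = x0].

Definition htpy_class (n : nat) (x0 : X) (f : ('I_n -> R) -> X)
  : set (('I_n -> R) -> X) :=
  [set g | Omega n x0 g /\ homotopic_rel n x0 f g].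

(* uniform metric mu (as an extended real; it is finite by compactness) *)
Definition mu (n : nat) (f g : ('I_n -> R) -> X) : \bar R :=
  ereal_sup [set (d (f t) (g t))%:E | t in cube n].

Definition rho (n : nat) (a b : set (('I_n -> R) -> X)) : \bar R :=
  ereal_inf [set mu n f g | f in a & g in b].

(* reversal in the first coordinate: representative of the inverse class *)
Definition loop_inv (n : nat) (f : ('I_n -> R) -> X) : ('I_n -> R) -> X :=
  fun t => f (fun i => if nat_of_ord i == 0%N then 1 - t i else t i).

End Defs.

Arguments is_metric {R X} d.
Arguments cube {R} n.
Arguments cube_boundary {R} n.
Arguments unit_interval {R}.
Arguments cont_on_cube {R X} d n f.
Arguments Omega {R X} d n x0.
Arguments homotopic_rel {R X} d n x0 f g.
Arguments htpy_class {R X} d n x0 f.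
Arguments mu {R X} d n f g.
Arguments rho {R X} d n a b.
Arguments loop_inv {R X} n f.

(** Reversing the first coordinate is an involutive isometry of the cube that
    preserves its boundary.  Precomposition with such a map sends maps to
    maps, homotopies rel boundary to homotopies rel boundary, hence classes
    onto classes, and it does not change the uniform distance of two maps,
    since both suprema range over the same set of values.  So the sets whose
    infima define the two sides of the identity coincide. *)
From HB Require Import structures.
From mathcomp Require Import all_boot all_order all_algebra.
From mathcomp Require Import boolp classical_sets reals ereal.
Import Order.TTheory GRing.Theory Num.Theory.
Local Open Scope classical_set_scope.
Local Open Scope ring_scope.

Set Implicit Arguments.

Section CubeSymmetry.
Variables (R : realType) (X : Type) (d : X -> X -> R) (x0 : X) (n : nat).
Variable phi : ('I_n -> R) -> ('I_n -> R).
Hypothesis phiK : involutive phi.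
Hypothesis phi_cube : forall t, cube n t -> cube n (phi t).
Hypothesis phi_boundary : forall t, cube_boundary n t -> cube_boundary n (phi t).
Hypothesis phi_nonexpansive : forall (del : R) s t,
  (forall i, `|s i - t i| < del) -> forall i, `|phi s i - phi t i| < del.

Implicit Types f g h : ('I_n -> R) -> X.

Lemma comp_phiK h : (h \o phi) \o phi = h.
Proof. by apply: funext => t /=; rewrite phiK. Qed.

Lemma Omega_comp h : Omega d n x0 h -> Omega d n x0 (h \o phi).
Proof.
move=> [h_cont h_bd]; split=> [t ht e e_gt0 | t ht]; last exact/h_bd/phi_boundary.
have [del del_gt0 h_del] := h_cont _ (phi_cube ht) e e_gt0.
exists del => // s hs st_del; apply: h_del; first exact: phi_cube.
exact: phi_nonexpansive.
Qed.

Lemma homotopic_rel_comp f g :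
  homotopic_rel d n x0 f g -> homotopic_rel d n x0 (f \o phi) (g \o phi).
Proof.
move=> [H [H_cont H0 H1 H_bd]]; exists (fun u t => H u (phi t)); split.
- move=> u t hu ht e e_gt0.
  have [del del_gt0 H_del] := H_cont u _ hu (phi_cube ht) e e_gt0.
  exists del => // v s hv hs uv_del st_del; apply: H_del => //.
    exact: phi_cube.
  exact: phi_nonexpansive.
- by move=> t /phi_cube /H0.
- by move=> t /phi_cube /H1.
- by move=> u t hu /phi_boundary; apply: H_bd.
Qed.

Lemma htpy_class_comp f h :
  htpy_class d n x0 f h -> htpy_class d n x0 (f \o phi) (h \o phi).
Proof. by move=> [/Omega_comp hO /homotopic_rel_comp fh]. Qed.

Lemma htpy_class_compE f :
  htpy_class d n x0 (f \o phi) = (fun h => h \o phi) @` htpy_class d n x0 f.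
Proof.
apply/seteqP; split=> [h fh | _ [h fh <-]]; last exact: htpy_class_comp.
by exists (h \o phi); [rewrite -[f]comp_phiK; apply: htpy_class_comp | apply: comp_phiK].
Qed.

Lemma mu_comp f g : mu d n (f \o phi) (g \o phi) = mu d n f g.
Proof.
rewrite /mu; congr ereal_sup; apply/seteqP; split=> _ [t ht <-].
  by exists (phi t); first exact: phi_cube.
by exists (phi t); [exact: phi_cube | rewrite /= phiK].
Qed.

Lemma rho_comp f g :
  rho d n (htpy_class d n x0 (f \o phi)) (htpy_class d n x0 (g \o phi))
  = rho d n (htpy_class d n x0 f) (htpy_class d n x0 g).
Proof.
rewrite /rho !htpy_class_compE; congr ereal_inf; apply/seteqP.
split=> z.
  by move=> [_ [h fh <-]] [_ [k gk <-]] <-; exists h => //; exists k; rewrite ?mu_comp.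
move=> [h fh] [k gk] <-.
by exists (h \o phi); [exists h | exists (k \o phi); [exists k | rewrite mu_comp]].
Qed.

End CubeSymmetry.

Section FirstCoordinateReversal.
Variables (R : realType) (n : nat).
Implicit Types s t : 'I_n -> R.

Definition reverse_first t : 'I_n -> R :=
  fun i => if nat_of_ord i == 0%N then 1 - t i else t i.

Lemma reverse_firstK : involutive reverse_first.
Proof. by move=> t; apply: funext => i; rewrite /reverse_first; case: eqP; rewrite ?subKr. Qed.

Lemma reverse_first_cube t : cube n t -> cube n (reverse_first t).
Proof.
move=> ht i; rewrite /reverse_first; case: eqP => _; last exact: ht.
by have /andP[t_ge0 t_le1] := ht i; rewrite subr_ge0 lerBlDr lerDl t_ge0 t_le1.
Qed.

Lemma reverse_first_boundary t :
  cube_boundary n t -> cube_boundary n (reverse_first t).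
Proof.
move=> [ht [i ti]]; split; first exact: reverse_first_cube.
exists i; rewrite /reverse_first; case: eqP => _ //.
by case: ti => ->; [right; rewrite subr0 | left; rewrite subrr].
Qed.

Lemma reverse_first_dist s t i :
  `|reverse_first s i - reverse_first t i| = `|s i - t i|.
Proof. by rewrite /reverse_first; case: eqP => _ //; rewrite opprB addrC addrA subrK distrC. Qed.

Lemma reverse_first_nonexpansive (del : R) s t :
  (forall i, `|s i - t i| < del) ->
  forall i, `|reverse_first s i - reverse_first t i| < del.
Proof. by move=> st_del i; rewrite reverse_first_dist. Qed.

End FirstCoordinateReversal.

Theorem lemma4p2 (R : realType) (X : Type) (d : X -> X -> R) (x0 : X) (n : nat)
  (hd : is_metric d) (hn : (0 < n)%N)
  (f g : ('I_n -> R) -> X) (hf : Omega d n x0 f) (hg : Omega d n x0 g) :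
  rho d n (htpy_class d n x0 f) (htpy_class d n x0 g)
  = rho d n (htpy_class d n x0 (loop_inv n f)) (htpy_class d n x0 (loop_inv n g)).
Proof.
(* [loop_inv n f] is [f \o reverse_first] by conversion. *)
symmetry; apply: (rho_comp _ _ (@reverse_firstK R n)).
- exact: reverse_first_cube.
- exact: reverse_first_boundary.
- exact: reverse_first_nonexpansive.
Qed.
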